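(* Let $n\ge3$ and $R$ a commutative ring containing an invertible element $v$. In $D_n$, for every $i$ (indices modulo $n$), $$E_{\overline{i+2}}E_{\overline{i+3}}\cdots E_{\overline{i+n}}=u^2E_i,$$ where the left side is the product of the $n-1$ elements $E_{\overline{i+2}},E_{\overline{i+3}},\dots,E_{\overline{i+n}}=E_{\bar i}$ in this order.
   Context: An affine $n$-diagram consists of the nodes $\mathbb{Z}\times\{0,1\}\subset\mathbb{R}^2$ (bottom row $\mathbb{Z}\times\{0\}$, top row $\mathbb{Z}\times\{1\}$) together with curves called edges such that: every node is an endpoint of exactly one edge; edges lie in $\mathbb{R}\times[0,1]$; an edge not joining two nodes is an infinite horizontal line meeting no node, and there are finitely many such; no two edges intersect; the diagram is invariant under horizontal translation by $n$. Diagrams are taken up to isotopy. The product $AB$: place $A$ on top of $B$, identify the bottom row of $A$ with the top row of $B$, remove the $x$ closed loops formed to get a diagram $C$; $AB=(v+v^{-1})^xC$. $D_n$ is the $R$-algebra with basis the affine $n$-diagrams and this product. $u$ is the diagram joining each bottom node $(j,0)$ to the top node $(j+1,1)$ by a straight segment. For $1\le i\le n$, $E_i$ is the diagram having, for each $k\equiv i\pmod n$, minimal horizontal edges joining $(k,1)$ to $(k+1,1)$ and $(k,0)$ to $(k+1,0)$, and straight vertical edges joining $(j,0)$ to $(j,1)$ for all $j\not\equiv i,i+1\pmod n$; $\bar i$ denotes the residue of $i$ mod $n$. *)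

From HB Require Import structures.
From mathcomp Require Import all_boot all_order all_algebra.
Set Implicit Arguments. Unset Strict Implicit. Unset Printing Implicit Defensive.
Import Order.TTheory GRing.Theory Num.Theory.
Local Open Scope ring_scope.

(** Nodes: (k, true) is the top node (k,1), (k, false) the bottom node (k,0). *)
Definition node := (int * bool)%type.

(** A (raw) affine n-diagram up to isotopy: the matching of nodes it induces,
    stored (using n-periodicity) as the lists of partners of the top nodes
    (r,1), 0<=r<n, and of the bottom nodes (r,0), 0<=r<n, together with its
    number of infinite horizontal lines. *)
Definition rdiag := ((seq node * seq node) * nat)%type.

Definition shiftn (n : nat) (k : int) : int := k - (k %% n%:Z)%Z.

Definition mt (n : nat) (d : rdiag) (x : node) : node :=
  let y := nth x (if x.2 then d.1.1 else d.1.2) (absz (x.1 %% n%:Z)%Z) in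
  (shiftn n x.1 + y.1, y.2).

Definition mk_rdiag (n : nat) (f : node -> node) (l : nat) : rdiag :=
  (([seq f (r%:Z, true) | r <- iota 0 n], [seq f (r%:Z, false) | r <- iota 0 n]), l).

(** Validity (the basis of D_n): order of the boundary of the strip read as a
    circle (top row left to right, then bottom row right to left). *)
Definition node_lt (x y : node) : bool :=
  match x.2, y.2 with
  | true, true => x.1 < y.1
  | true, false => true
  | false, true => false
  | false, false => y.1 < x.1
  end.

Definition is_diagram (n : nat) (d : rdiag) : Prop :=
  [/\ (0 < n)%N, size d.1.1 = n & size d.1.2 = n] /\
  [/\ forall x, mt n d (mt n d x) = x,
      forall x, mt n d x != x,
      forall x y, ~~ [&& node_lt x y, node_lt y (mt n d x) & node_lt (mt n d x) (mt n d y)]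
    & (0 < d.2)%N -> forall x, (mt n d x).2 = x.2 ].

(** Stacking A on top of B. A state (k, true) means: at middle node k (bottom
    row of A = top row of B), about to follow the edge of A; (k,false): about
    to follow the edge of B. *)
Definition mstep (n : nat) (A B : rdiag) (s : int * bool) : option (int * bool) :=
  if s.2 then (let y := mt n A (s.1, false) in if y.2 then None else Some (y.1, false))
  else (let y := mt n B (s.1, true) in if y.2 then Some (y.1, true) else None).

Fixpoint miter (n : nat) (A B : rdiag) (j : nat) (s : int * bool) : option (int * bool) :=
  match j with
  | 0 => Some s
  | j'.+1 => obind (mstep n A B) (miter n A B j' s)
  end.

Fixpoint walk (n : nat) (A B : rdiag) (fuel : nat) (s : int * bool) : option node :=
  match fuel with
  | 0 => None
  | f.+1 =>
    if s.2 then (let y := mt n A (s.1, false) in if y.2 then Some y else walk n A B f (y.1, false))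
    else (let y := mt n B (s.1, true) in if y.2 then walk n A B f (y.1, true) else Some y)
  end.

(** Sufficient fuel: by periodicity a walk through the middle row visits at
    most 2n states before exiting or repeating. *)
Definition fuel (n : nat) : nat := (2 * n).+2.

Definition comp_match (n : nat) (A B : rdiag) (x : node) : node :=
  if x.2 then (let y := mt n A x in if y.2 then y else odflt x (walk n A B (fuel n) (y.1, false)))
  else (let y := mt n B x in if y.2 then odflt x (walk n A B (fuel n) (y.1, true)) else y).

Definition closedb (n : nat) (A B : rdiag) (k : int) : bool :=
  has (fun j => miter n A B j (k, true) == Some (k, true)) (iota 1 (fuel n)).
Definition loop_minb (n : nat) (A B : rdiag) (k : int) : bool :=
  all (fun j => if miter n A B j (k, true) is Some s then k <= s.1 else true) (iota 0 (fuel n)).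
(** middle node k lies on an infinite path (which becomes a horizontal line) *)
Definition infb (n : nat) (A B : rdiag) (k : int) : bool :=
  (miter n A B (fuel n) (k, true) != None) && ~~ closedb n A B k.
Definition inf_minb (n : nat) (A B : rdiag) (k : int) : bool :=
  all (fun j => if miter n A B j (k, true) is Some s then k <= (s.1 %% n%:Z)%Z else true)
      (iota 0 (fuel n)).

(** number of closed loops, counted up to translation by n *)
Definition nloops (n : nat) (A B : rdiag) : nat :=
  count (fun r : nat => closedb n A B r%:Z && loop_minb n A B r%:Z) (iota 0 n).
Definition nlines (n : nat) (A B : rdiag) : nat :=
  count (fun r : nat => infb n A B r%:Z && inf_minb n A B r%:Z) (iota 0 n).

(** AB = (v+v^-1)^x C : returns (x, C). *)
Definition rmul (n : nat) (A B : rdiag) : nat * rdiag :=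
  (nloops n A B, mk_rdiag n (comp_match n A B) (A.2 + B.2 + nlines n A B)%N).

(** Elements of D_n: finite formal R-linear combinations of diagrams;
    two elements are equal in D_n iff their coefficient functions agree. *)
Definition Dn (R : Type) := seq (R * rdiag).

Definition dcoef (R : nmodType) (a : Dn R) (D : rdiag) : R :=
  \sum_(p <- a | p.2 == D) p.1.

Definition Dbasis (R : pzSemiRingType) (D : rdiag) : Dn R := [:: (1, D)].

Definition dmul (R : pzSemiRingType) (n : nat) (delta : R) (a b : Dn R) : Dn R :=
  [seq (delta ^+ (rmul n p.2 q.2).1 * (p.1 * q.1), (rmul n p.2 q.2).2) | p <- a, q <- b].

(** The generators. E k = E_{\bar k}: cups/caps joining (j,_) and (j+1,_)
    for j = k mod n, vertical edges elsewhere. *)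
Definition Ef (n : nat) (k : int) (x : node) : node :=
  if ((x.1 - k) %% n%:Z)%Z == 0 then (x.1 + 1, x.2)
  else if ((x.1 - k - 1) %% n%:Z)%Z == 0 then (x.1 - 1, x.2)
  else (x.1, ~~ x.2).
Definition Ed (n : nat) (k : int) : rdiag := mk_rdiag n (Ef n k) 0.

(** u joins (j,0) to (j+1,1). *)
Definition uf (x : node) : node := if x.2 then (x.1 - 1, false) else (x.1 + 1, true).
Definition ud (n : nat) : rdiag := mk_rdiag n uf 0.

(* The partial products E_{i+2} E_{i+3} ... E_{i+m} (2 <= m <= n) are single
   diagrams P_m: P_m has a cap on the top nodes i+2, i+3, a cup on the bottom
   nodes i+m, i+m+1, strands joining (k,1) to (k-2,0) for i+4 <= k <= i+m+1,
   and vertical strands elsewhere (everything mod n). Multiplying P_m by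
   E_{i+m+1} just slides the cup one step to the right; every strand leaves
   the middle row within four steps, so no closed loop or horizontal line
   appears. For m = n the cup sits on i, i+1, and P_n is also what u u E_i
   evaluates to, again without loops. Hence both sides are the same basis
   diagram with coefficient 1, whatever v is. *)
From HB Require Import structures.
From mathcomp Require Import all_boot all_order all_algebra.
From mathcomp Require Import zify.
Import GRing.Theory.
Local Open Scope ring_scope.

(** Lets the tactics below trade [modz] for linear arithmetic once the
    quotient [e %/ n] is known up to 2. *)
Lemma modz_window (n : nat) (q e : int) : (0 < n)%N ->
  -(2 * n%:Z) <= e - q * n%:Z < 3 * n%:Z ->
  (e %% n%:Z)%Z = let t := e - q * n%:Z in
     if t < - n%:Z then t + 2 * n%:Z else if t < 0 then t + n%:Z
     else if t < n%:Z then t else if t < 2 * n%:Z then t - n%:Z else t - 2 * n%:Z.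
Proof.
move=> n_gt0 t_range /=.
have shift t c : ((t + c * n%:Z) %% n%:Z)%Z = (t %% n%:Z)%Z by rewrite addrC modzMDl.
rewrite -{1}(subrK (q * n%:Z) e) shift; move: (e - q * n%:Z) t_range => t t_range.
case: ifP => ?; first by rewrite -(shift t 2) modz_small; lia.
case: ifP => ?; first by rewrite -(shift t 1) modz_small; lia.
case: ifP => ?; first by rewrite modz_small; lia.
case: ifP => ?; first by rewrite -(shift t (-1)) modz_small; lia.
by rewrite -(shift t (-2)) modz_small; lia.
Qed.

Lemma int_decomp_mod (n : nat) (c k : int) : (0 < n)%N ->
  exists s q : int, 0 <= s < n%:Z /\ k = c + s + q * n%:Z.
Proof.
move=> n_gt0; exists ((k - c) %% n%:Z)%Z, ((k - c) %/ n%:Z)%Z.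
have s_ge0 : 0 <= ((k - c) %% n%:Z)%Z by apply: modz_ge0; lia.
have s_lt : ((k - c) %% n%:Z)%Z < n%:Z by apply: ltz_pmod; lia.
have := divz_eq (k - c) n%:Z; lia.
Qed.

Definition periodic (n : nat) (f : node -> node) := forall (r c : int) (b : bool),
  f (r + c * n%:Z, b) = ((f (r, b)).1 + c * n%:Z, (f (r, b)).2).

Lemma mt_mk_rdiag n f l x : (0 < n)%N -> periodic n f -> mt n (mk_rdiag n f l) x = f x.
Proof.
move=> n_gt0 f_per; case: x => k b; rewrite /mt /mk_rdiag /=.
have r_ge0 : 0 <= (k %% n%:Z)%Z by apply: modz_ge0; lia.
have r_lt : (k %% n%:Z)%Z < n%:Z by apply: ltz_pmod; lia.
have r_size : (absz (k %% n%:Z)%Z < size (iota 0 n))%N by rewrite size_iota; lia.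
have r_lt' : (absz (k %% n%:Z)%Z < n)%N by lia.
have r_abs : (absz (k %% n%:Z)%Z)%:Z = (k %% n%:Z)%Z by lia.
have k_eq : k = (k %% n%:Z)%Z + (k %/ n%:Z)%Z * n%:Z by rewrite addrC -divz_eq.
by case: b; rewrite (nth_map 0%N) // nth_iota // add0n r_abs [in RHS]k_eq f_per /shiftn;
  congr (_, _); lia.
Qed.

Lemma mk_rdiag_ext n f g l : f =1 g -> mk_rdiag n f l = mk_rdiag n g l.
Proof. by move=> fg; rewrite /mk_rdiag !(eq_map (fun r => fg (r%:Z, _))). Qed.

Lemma walkS n A B f s : walk n A B f.+1 s =
  if s.2 then (let y := mt n A (s.1, false) in if y.2 then Some y else walk n A B f (y.1, false))
  else (let y := mt n B (s.1, true) in if y.2 then walk n A B f (y.1, true) else Some y).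
Proof. by []. Qed.

Lemma mstepE n A B s : mstep n A B s =
  if s.2 then (let y := mt n A (s.1, false) in if y.2 then None else Some (y.1, false))
  else (let y := mt n B (s.1, true) in if y.2 then Some (y.1, true) else None).
Proof. by []. Qed.

Lemma miter0 n A B s : miter n A B 0 s = Some s.
Proof. by []. Qed.

Lemma miterS n A B j s : miter n A B j.+1 s = obind (mstep n A B) (miter n A B j s).
Proof. by []. Qed.

Lemma miter_noneD n A B j d s : miter n A B j s = None -> miter n A B (j + d) s = None.
Proof. by move=> dead; elim: d => [|d IHd]; rewrite ?addn0 // addnS miterS IHd. Qed.

Definition loopfree (n : nat) (A B : rdiag) :=
  forall k, closedb n A B k = false /\ infb n A B k = false.

Lemma dead_end_loopfree n A B : (4 <= fuel n)%N ->
  (forall k, [/\ miter n A B 4 (k, true) = None,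
     miter n A B 1 (k, true) != Some (k, true),
     miter n A B 2 (k, true) != Some (k, true) &
     miter n A B 3 (k, true) != Some (k, true)]) ->
  loopfree n A B.
Proof.
move=> fuel_ge4 dead k; have [dead4 ne1 ne2 ne3] := dead k.
have not_closed : closedb n A B k = false.
  apply/negbTE/hasPn => j; rewrite mem_iota => /andP [j_ge1 _].
  case: j j_ge1 => [|[|[|[|j]]]] // _.
  by rewrite -add4n miter_noneD.
split=> //; rewrite /infb not_closed -(subnKC fuel_ge4) miter_noneD //.
Qed.

Lemma rmul_loopfree n A B F : A.2 = 0%N -> B.2 = 0%N -> loopfree n A B ->
  comp_match n A B =1 F -> rmul n A B = (0%N, mk_rdiag n F 0).
Proof.
move=> A_lines B_lines no_loop AB_F.
have no_loops : nloops n A B = 0%N.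
  by rewrite /nloops (@eq_count _ _ pred0) ?count_pred0 // => r; rewrite (no_loop r%:Z).1.
have no_lines : nlines n A B = 0%N.
  by rewrite /nlines (@eq_count _ _ pred0) ?count_pred0 // => r; rewrite (no_loop r%:Z).2.
rewrite /rmul no_loops no_lines A_lines B_lines; congr (_, _); exact: mk_rdiag_ext.
Qed.

Lemma dmul_Dbasis_noloop {R : pzSemiRingType} (d : R) {n : nat} {A B C : rdiag} :
  rmul n A B = (0%N, C) -> dmul n d (Dbasis R A) (Dbasis R B) = Dbasis R C.
Proof.
move=> AB_C; have -> : dmul n d (Dbasis R A) (Dbasis R B)
    = [:: (d ^+ (rmul n A B).1 * (1 * 1), (rmul n A B).2)] by [].
by rewrite AB_C expr0 !mul1r.
Qed.

(** The diagram P_m, in the coordinate [s = k - i - 2 mod n]. *)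
Definition chain_pos (n : nat) (i k : int) : int := ((k - i - 2) %% n%:Z)%Z.
Definition chain_match (n : nat) (i m : int) (x : node) : node :=
  let s := chain_pos n i x.1 in
  if x.2 then
    (if s == 0 then (x.1 + 1, true) else if s == 1 then (x.1 - 1, true)
     else if s < m then (x.1 - 2, false) else (x.1, false))
  else
    (if s <= m - 3 then (x.1 + 2, true) else if s == m - 2 then (x.1 + 1, false)
     else if s == m - 1 then (x.1 - 1, false) else (x.1, true)).
Definition chain_diag (n : nat) (i m : int) : rdiag := mk_rdiag n (chain_match n i m) 0.

Definition u2_match (x : node) : node := if x.2 then (x.1 - 2, false) else (x.1 + 2, true).
Definition u2_diag (n : nat) : rdiag := mk_rdiag n u2_match 0.

(** Keeps [cbn] away from these; the tactics below unfold them one step at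
    a time. *)
Opaque mt walk miter mstep modz.

Ltac elim_modz n q n_gt0 := match goal with |- context [modz ?e (Posz n)] =>
  rewrite (@modz_window n q e n_gt0 ltac:(lia)) end.
Ltac decide_if := match goal with |- context [if ?c then _ else _] =>
  first [ let H := fresh in (have H : c by lia); rewrite H; clear H
        | let H := fresh in (have H : ~~ c by lia); rewrite (negbTE H); clear H ] end.
Ltac split_if := match goal with
  | |- context [if (?a < ?b) then _ else _] => case: (boolP (a < b)) => ?
  | |- context [if (?a <= ?b) then _ else _] => case: (boolP (a <= b)) => ?
  | |- context [if (?a == ?b :> int) then _ else _] => case: (boolP (a == b)) => ?
  end.
(** [q] and [q'] are guesses for the quotients by [n] of the positions met. *)
Ltac crunch_step n q q' n_gt0 := first
  [ progress rewrite /chain_match /chain_pos /Ef /uf /u2_match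
  | progress cbn [fst snd negb Option.default Option.bind Option.apply odflt oapp obind]
  | elim_modz n q n_gt0 | elim_modz n q' n_gt0 | decide_if | split_if ].
Ltac crunch n q q' n_gt0 := repeat crunch_step n q q' n_gt0.
Ltac crunch_walk mtA mtB n q n_gt0 := repeat first
  [ progress rewrite ?mtA ?mtB | crunch_step n q q n_gt0
  | rewrite mstepE | rewrite walkS | rewrite miterS | rewrite miter0 ].
Ltac finish := try (exfalso; lia); try (congr (_, _); lia); try done;
  try (apply/eqP; case=> *; try done; lia).

Lemma chain_match_periodic n i m : (0 < n)%N -> periodic n (chain_match n i m).
Proof.
move=> n_gt0 r c b; have [s [q [s_range ->]]] := int_decomp_mod _ (i + 2) r n_gt0.
by case: b; crunch n q (q + c) n_gt0; finish.
Qed.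

Lemma Ef_periodic n k : (0 < n)%N -> periodic n (Ef n k).
Proof.
move=> n_gt0 r c b; have [s [q [s_range ->]]] := int_decomp_mod _ k r n_gt0.
by case: b; crunch n q (q + c) n_gt0; finish.
Qed.

Lemma uf_periodic n : periodic n uf.
Proof. by move=> r c [] /=; rewrite /uf /=; congr (_, _); lia. Qed.

Lemma u2_match_periodic n : periodic n u2_match.
Proof. by move=> r c [] /=; rewrite /u2_match /=; congr (_, _); lia. Qed.

Lemma Ef_chain_match2 n i : (0 < n)%N -> Ef n (i + 2) =1 chain_match n i 2.
Proof.
move=> n_gt0 [k b]; have [s [q [s_range ->]]] := int_decomp_mod _ (i + 2) k n_gt0.
by case: b; crunch n q q n_gt0; finish.
Qed.

Section Products.

Variable n : nat.
Hypothesis n_ge3 : (3 <= n)%N.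

Let n_gt0 : (0 < n)%N. Proof. exact: leq_trans n_ge3. Qed.
Let fuel_ge4 : (4 <= fuel n)%N. Proof. rewrite /fuel; lia. Qed.
Let fuel_eq : fuel n = (2 * n - 2).+4. Proof. rewrite /fuel; lia. Qed.

Lemma mt_chain_diag i m : mt n (chain_diag n i m) =1 chain_match n i m.
Proof. by move=> x; apply: mt_mk_rdiag => //; apply: chain_match_periodic. Qed.

Lemma mt_Ed k : mt n (Ed n k) =1 Ef n k.
Proof. by move=> x; apply: mt_mk_rdiag => //; apply: Ef_periodic. Qed.

Lemma mt_ud : mt n (ud n) =1 uf.
Proof. by move=> x; apply: mt_mk_rdiag => //; apply: uf_periodic. Qed.

Lemma mt_u2_diag : mt n (u2_diag n) =1 u2_match.
Proof. by move=> x; apply: mt_mk_rdiag => //; apply: u2_match_periodic. Qed.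

Lemma rmul_chain_step i m : 2 <= m <= n%:Z - 1 ->
  rmul n (chain_diag n i m) (Ed n (i + m + 1)) = (0%N, chain_diag n i (m + 1)).
Proof.
move=> m_range; apply: rmul_loopfree => //.
- apply: dead_end_loopfree => // k.
  have [s [q [s_range ->]]] := int_decomp_mod _ (i + 2) k n_gt0.
  by split; crunch_walk (mt_chain_diag i m) (mt_Ed (i + m + 1)) n q n_gt0; finish.
- move=> [k b]; have [s [q [s_range ->]]] := int_decomp_mod _ (i + 2) k n_gt0.
  rewrite /comp_match fuel_eq; case: b; cbn [fst snd].
  all: by crunch_walk (mt_chain_diag i m) (mt_Ed (i + m + 1)) n q n_gt0; finish.
Qed.

Lemma rmul_uu : rmul n (ud n) (ud n) = (0%N, u2_diag n).
Proof.
apply: rmul_loopfree => //.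
- apply: dead_end_loopfree => // k.
  by split; crunch_walk mt_ud mt_ud n (0 : int) n_gt0; finish.
- move=> [k b]; rewrite /comp_match fuel_eq; case: b; cbn [fst snd].
  all: by crunch_walk mt_ud mt_ud n (0 : int) n_gt0; finish.
Qed.

Lemma rmul_u2E i : rmul n (u2_diag n) (Ed n i) = (0%N, chain_diag n i n%:Z).
Proof.
apply: rmul_loopfree => //.
- apply: dead_end_loopfree => // k.
  have [s [q [s_range ->]]] := int_decomp_mod _ (i + 2) k n_gt0.
  by split; crunch_walk mt_u2_diag (mt_Ed i) n q n_gt0; finish.
- move=> [k b]; have [s [q [s_range ->]]] := int_decomp_mod _ (i + 2) k n_gt0.
  rewrite /comp_match fuel_eq; case: b; cbn [fst snd].
  all: by crunch_walk mt_u2_diag (mt_Ed i) n q n_gt0; finish.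
Qed.

Lemma foldl_Ed_chain (R : pzSemiRingType) (d : R) i k : (k <= n - 2)%N ->
  foldl (dmul n d) (Dbasis R (Ed n (i + 2)))
        [seq Dbasis R (Ed n (i + j%:Z)) | j <- iota 3 k]
  = Dbasis R (chain_diag n i (2 + k%:Z)).
Proof.
elim: k => [|k IHk] k_le.
  by rewrite addr0 /=; congr (Dbasis R _); apply: mk_rdiag_ext; exact: Ef_chain_match2.
rewrite -[k.+1]addn1 iotaD map_cat foldl_cat IHk; last by lia.
rewrite /= (_ : i + (3 + k)%:Z = i + (2 + k%:Z) + 1); last by lia.
rewrite (dmul_Dbasis_noloop _ (rmul_chain_step i (2 + k%:Z) _)); last by lia.
by congr (Dbasis R (chain_diag n i _)); lia.
Qed.

End Products.

Theorem lemma2p3p2 (R : comPzRingType) (v vinv : R) (hv : v * vinv = 1)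
  (n : nat) (hn : (3 <= n)%N) (i : int) :
  forall D : rdiag,
    dcoef (foldl (dmul n (v + vinv)) (Dbasis R (Ed n (i + 2)))
                 [seq Dbasis R (Ed n (i + j%:Z)) | j <- iota 3 (n - 2)]) D
    = dcoef (dmul n (v + vinv) (dmul n (v + vinv) (Dbasis R (ud n)) (Dbasis R (ud n)))
                  (Dbasis R (Ed n i))) D.
Proof.
move=> D; rewrite foldl_Ed_chain // (dmul_Dbasis_noloop _ (rmul_uu _ hn)).
rewrite (dmul_Dbasis_noloop _ (rmul_u2E _ hn i)).
by rewrite (_ : 2 + (n - 2)%N%:Z = n%:Z) //; lia.
Qed.
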